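(* Let $q$ be even and $\mu\in\mathbb F_q^*\setminus\{1\}$. Then $N_1(\mu)=\#\{\gamma\in\mathbb F_q^*:\mathrm{Tr}_2(\delta_{\mu,\gamma})=1\}$ and $\widetilde N_1(\mu)=\#\{c\in\mathbb F_q^*:\mathrm{Tr}_2(\widetilde\delta_{\mu,c})=1\}$, where $\delta_{\mu,\gamma}=\dfrac{\mu^3+\gamma^4}{\gamma^2(\mu+1)^2}+\dfrac1{\mu+1}$ and $\widetilde\delta_{\mu,c}=\dfrac{1+\mu c^4}{c^2(\mu+1)^2}+\dfrac{\mu}{\mu+1}$.
   Context: $\mathrm{Tr}_2$ denotes the absolute trace $\mathbb F_q\to\mathbb F_2$. $N_1(\mu)$ is the number of $\gamma\in\mathbb F_q$ such that $t^3+\gamma t^2+\mu t+\gamma=0$ has exactly one solution $t\in\mathbb F_q$; $\widetilde N_1(\mu)$ is the number of $c\in\mathbb F_q^*$ such that $t^3+ct^2+t+\mu c=0$ has exactly one solution $t\in\mathbb F_q$. *)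

From mathcomp Require Import all_boot all_order all_algebra all_field.
Set Implicit Arguments. Unset Strict Implicit. Unset Printing Implicit Defensive.
Import GRing.Theory.
Local Open Scope ring_scope.

Definition Tr2 (F : finFieldType) (x : F) : F :=
  \sum_(i < logn 2 #|F|) x ^+ (2 ^ i).

Definition N1 (F : finFieldType) (mu : F) : nat :=
  #|[set gamma : F |
      #|[set t : F | t ^+ 3 + gamma * t ^+ 2 + mu * t + gamma == 0]| == 1%N]|.

Definition N1t (F : finFieldType) (mu : F) : nat :=
  #|[set c : F | (c != 0) &&
      (#|[set t : F | t ^+ 3 + c * t ^+ 2 + t + mu * c == 0]| == 1%N)]|.

Definition delta (F : finFieldType) (mu gamma : F) : F :=
  (mu ^+ 3 + gamma ^+ 4) / (gamma ^+ 2 * (mu + 1) ^+ 2) + (mu + 1)^-1.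

Definition deltat (F : finFieldType) (mu c : F) : F :=
  (1 + mu * c ^+ 4) / (c ^+ 2 * (mu + 1) ^+ 2) + mu / (mu + 1).

From mathcomp Require Import all_boot all_order all_algebra all_field.
From mathcomp Require Import ring.
Set Implicit Arguments. Unset Strict Implicit. Unset Printing Implicit Defensive.
Import GRing.Theory.
Local Open Scope ring_scope.

(* Shifting t by gamma (resp. c) turns both cubics into t^3 + a t + b with b <> 0
   (for gamma = 0 the cubic t^3 + mu t has the two roots 0 and sqrt mu).  If s is a
   root, the other roots are the s y with y^2 + y = 1 + a/s^2, and by the additive
   Hilbert 90 such y exist iff Tr(1 + a/s^2) = 0; since 1 + a/s^2 and 1 + a^3/b^2
   differ by some z^2 + z, a cubic with a root has a unique root iff
   Tr(1 + a^3/b^2) = 1.  Cubics without a root are handled by counting: b |-> b/a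
   maps the b with Tr(1 + a^3/b^2) = 1 injectively to the s with Tr(1 + a/s^2) = 1,
   and s |-> s^3 + a s maps those injectively to the b with a unique root, which
   all have trace one.  Finally delta and delta~ differ from 1 + a^3/b^2 by z^2 + z
   with z = (gamma^2 + 1)/(mu + 1), resp. (c^2 + 1)/(mu + 1). *)

Lemma size_sum_Xexp2 (R : nzRingType) m :
  size (\sum_(i < m.+1) 'X^(2 ^ i) : {poly R}) = (2 ^ m).+1.
Proof.
elim: m => [|m IHm]; first by rewrite big_ord1 expn0 size_polyXn.
rewrite big_ord_recr /= addrC size_polyDl size_polyXn // IHm ltnS.
by rewrite ltn_exp2l.
Qed.

Section CharTwo.

Variable F : finFieldType.
Hypothesis charF : 2%N \in [pchar F].

Local Notation n := (logn 2 #|F|).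

Definition artin_schreier (y : F) := y ^+ 2 + y.

Lemma two_eq0 : 2%:R = 0 :> F.
Proof. exact: pcharf0 charF. Qed.

Lemma card_char2 : #|F| = (2 ^ n)%N.
Proof. exact: card_pprimeChar charF. Qed.

Lemma logn_card_gt0 : (0 < n)%N.
Proof.
have : (1 < #|F|)%N by apply/card_gt1P; exists 0, 1; rewrite eq_sym oner_neq0.
by rewrite {1}card_char2; case: (logn 2 #|F|).
Qed.

Lemma exprD_char2 i (x y : F) : (x + y) ^+ (2 ^ i) = x ^+ (2 ^ i) + y ^+ (2 ^ i).
Proof. by rewrite exprDn_pchar // pnatX pnatE // charF. Qed.

Lemma Tr2D (x y : F) : Tr2 (x + y) = Tr2 x + Tr2 y.
Proof. by rewrite /Tr2 -big_split; apply: eq_bigr => i _; rewrite exprD_char2. Qed.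

Lemma Tr2_sqr (x : F) : Tr2 (x ^+ 2) = Tr2 x.
Proof.
rewrite /Tr2 -(prednK logn_card_gt0) big_ord_recr big_ord_recl /= addrC.
congr (_ + _); last by apply: eq_bigr => i _; rewrite -exprM -expnS.
by rewrite -exprM -expnS prednK ?logn_card_gt0 // -card_char2 expf_card.
Qed.

Lemma Tr2_artin_schreier (y : F) : Tr2 (artin_schreier y) = 0.
Proof. by rewrite Tr2D Tr2_sqr addrr_pchar2. Qed.

Lemma Tr2_01 (x : F) : Tr2 x = 0 \/ Tr2 x = 1.
Proof.
have idem : Tr2 x ^+ 2 = Tr2 x.
  rewrite -[in RHS]Tr2_sqr -(pFrobenius_autE charF) rmorph_sum.
  by apply: eq_bigr => i _; rewrite /= pFrobenius_autE -!exprM mulnC.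
have /eqP : Tr2 x * (Tr2 x - 1) = 0 by rewrite mulrBr mulr1 -expr2 idem subrr.
by rewrite mulf_eq0 subr_eq0 => /orP[] /eqP; [left | right].
Qed.

Lemma sqrt_char2 (x : F) : exists r : F, r ^+ 2 = x.
Proof.
have [sqrt _ sqrtK] := injF_bij (fmorph_inj (pFrobenius_aut charF)).
by exists (sqrt x); rewrite -(pFrobenius_autE charF) sqrtK.
Qed.

Lemma card_Tr2_eq0 : (#|[set x : F | Tr2 x == 0%R]| <= 2 ^ n.-1)%N.
Proof.
pose p : {poly F} := \sum_(i < n) 'X^(2 ^ i).
have size_p : size p = (2 ^ n.-1).+1 by rewrite /p -(prednK logn_card_gt0) size_sum_Xexp2.
have p_neq0 : p != 0 by rewrite -size_poly_eq0 size_p.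
rewrite cardE -ltnS -size_p max_poly_roots ?enum_uniq //.
apply/allP => x; rewrite mem_enum inE /root /p horner_sum.
by under eq_bigr do rewrite hornerXn.
Qed.

Lemma artin_schreier_fibre (y z : F) :
  artin_schreier z = artin_schreier y -> z \in [set y; y + 1].
Proof.
(* [ring] and [field] know nothing about the characteristic, so identities valid
   only in characteristic 2 are stated up to an explicit multiple of 2. *)
move=> e; have e2 : (z + y) * (z + y + 1)
    = artin_schreier z + artin_schreier y + 2%:R * (y * z).
  by rewrite /artin_schreier; ring.
rewrite e two_eq0 mul0r addr0 (addrr_pchar2 charF) in e2.
by move/eqP: e2; rewrite mulf_eq0 -addrA !addr_eq0 !(oppr_pchar2 charF) !inE.
Qed.

Lemma card_artin_schreier_image : (#|F| <= #|artin_schreier @: [set: F]| * 2)%N.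
Proof.
rewrite -cardsT -sum1_card (partition_big_imset artin_schreier) /= -sum_nat_const.
apply: leq_sum => _ /imsetP[y _ ->].
rewrite sum1_card (@leq_trans #|[set y; y + 1]|) //; last by rewrite cards2 ltnS leq_b1.
apply: subset_leq_card; apply/subsetP => z /andP[_ /eqP]; exact: artin_schreier_fibre.
Qed.

Lemma Tr2_eq0_artin_schreier (c : F) : Tr2 c = 0 -> exists y, artin_schreier y = c.
Proof.
move=> Tc; pose K := [set x : F | Tr2 x == 0]; pose I := artin_schreier @: [set: F].
have sub_IK : I \subset K.
  by apply/subsetP => _ /imsetP[y _ ->]; rewrite inE Tr2_artin_schreier.
have /eqP eq_IK : I == K.
  rewrite -(subset_leqif_cards sub_IK) eqn_leq subset_leq_card //=.
  rewrite (leq_trans card_Tr2_eq0) // -(leq_pmul2r (_ : 0 < 2)%N) // -expnSr.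
  by rewrite prednK ?logn_card_gt0 // -card_char2 card_artin_schreier_image.
have : c \in K by rewrite inE Tc.
by rewrite -eq_IK => /imsetP[y _ ->]; exists y.
Qed.

Definition cubic_roots (a b : F) := [set s : F | s ^+ 3 + a * s + b == 0].

Lemma in_cubic_roots a b s : (s \in cubic_roots a b) = (b == s * (s ^+ 2 + a)).
Proof.
rewrite inE addr_eq0 (oppr_pchar2 charF) eq_sym.
by rewrite (_ : s ^+ 3 + a * s = s * (s ^+ 2 + a)) //; ring.
Qed.

Lemma cubic_root_neq0 a b s : b != 0 -> s \in cubic_roots a b ->
  (s != 0) && (s ^+ 2 + a != 0).
Proof. by rewrite in_cubic_roots -negb_or -mulf_eq0 => b0 /eqP <-. Qed.

Lemma cubic_roots_other a b s r : s \in cubic_roots a b ->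
  (r \in cubic_roots a b) = (r == s) || (r ^+ 2 + r * s + s ^+ 2 + a == 0).
Proof.
rewrite !inE => /eqP s_root.
have -> : r ^+ 3 + a * r + b
    = (r - s) * (r ^+ 2 + r * s + s ^+ 2 + a) + (s ^+ 3 + a * s + b) by ring.
by rewrite s_root addr0 mulf_eq0 subr_eq0.
Qed.

Lemma quadratic_artin_schreier a s r : s != 0 ->
  (r ^+ 2 + r * s + s ^+ 2 + a == 0) = (artin_schreier (r / s) == 1 + a / s ^+ 2).
Proof.
move=> s0; have -> : r ^+ 2 + r * s + s ^+ 2 + a
    = s ^+ 2 * (artin_schreier (r / s) + (1 + a / s ^+ 2)).
  by rewrite /artin_schreier; field.
by rewrite mulf_eq0 expf_eq0 (negPf s0) /= addr_eq0 (oppr_pchar2 charF).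
Qed.

Lemma Tr2_cubic_root a b s : b != 0 -> s \in cubic_roots a b ->
  Tr2 (1 + a ^+ 3 / b ^+ 2) = Tr2 (1 + a / s ^+ 2).
Proof.
move=> b0 sR; have /andP[s0 u0] := cubic_root_neq0 b0 sR.
move: sR; rewrite in_cubic_roots => /eqP->.
have -> : a ^+ 3 / (s * (s ^+ 2 + a)) ^+ 2
    = a / s ^+ 2 + artin_schreier (s ^+ 2 / (s ^+ 2 + a))
      - 2%:R * ((a * s ^+ 2 + a ^+ 2 + s ^+ 4) / (s ^+ 2 + a) ^+ 2).
  by rewrite /artin_schreier; field; rewrite s0 u0.
by rewrite two_eq0 mul0r subr0 addrA Tr2D Tr2_artin_schreier addr0.
Qed.

Lemma card_cubic_roots_eq1_root a b s : b != 0 -> s \in cubic_roots a b ->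
  (#|cubic_roots a b| == 1%N) = (Tr2 (1 + a / s ^+ 2) == 1).
Proof.
move=> b0 sR; have /andP[s0 u0] := cubic_root_neq0 b0 sR.
have other r : (r \in cubic_roots a b)
    = (r == s) || (artin_schreier (r / s) == 1 + a / s ^+ 2).
  by rewrite (cubic_roots_other r sR) quadratic_artin_schreier.
apply/idP/idP => [card1 | T1].
  case: (Tr2_01 (1 + a / s ^+ 2)) => [T0 | -> //].
  have [y ey] := Tr2_eq0_artin_schreier T0.
  have y_neq1 : y != 1.
    have c_neq0 : 1 + a / s ^+ 2 != 0.
      rewrite (_ : 1 + a / s ^+ 2 = (s ^+ 2 + a) / s ^+ 2); last by field.
      by rewrite mulf_neq0 ?invr_eq0 ?expf_neq0.
    apply: contra_eq_neq ey => ->.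
    by rewrite /artin_schreier expr1n (addrr_pchar2 charF) eq_sym.
  have syR : s * y \in cubic_roots a b.
    by rewrite other [s * y]mulrC mulfK // ey eqxx orbT.
  have /card_le1_eqP root_uniq : (#|cubic_roots a b| <= 1)%N by rewrite (eqP card1).
  move: y_neq1; rewrite (mulfI s0 (_ : s * y = s * 1)) ?eqxx // mulr1.
  exact: root_uniq.
apply/cards1P; exists s; apply/setP => r; rewrite inE other.
have /negPf-> : artin_schreier (r / s) != 1 + a / s ^+ 2.
  by apply: contraTneq T1 => <-; rewrite Tr2_artin_schreier eq_sym oner_eq0.
by rewrite orbF.
Qed.

Section UniqueRoot.

Variable a : F.

Let unique_root := [set b : F | (b != 0) && (#|cubic_roots a b| == 1%N)].
Let trace_one := [set b : F | (b != 0) && (Tr2 (1 + a ^+ 3 / b ^+ 2) == 1)].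
Let root_trace_one :=
  [set s : F | (s * (s ^+ 2 + a) != 0) && (Tr2 (1 + a / s ^+ 2) == 1)].

Lemma unique_root_sub_trace_one : unique_root \subset trace_one.
Proof.
apply/subsetP => b /[!inE] /andP[b0 /[dup] card1 /cards1P[s eR]].
have sR : s \in cubic_roots a b by rewrite eR set11.
by rewrite b0 (Tr2_cubic_root b0 sR) -(card_cubic_roots_eq1_root b0 sR).
Qed.

Lemma card_root_trace_one : (#|root_trace_one| <= #|unique_root|)%N.
Proof.
pose phi s := s * (s ^+ 2 + a).
have phiR s : s \in cubic_roots a (phi s) by rewrite in_cubic_roots.
have phi_inj : {in root_trace_one &, injective phi}.
  move=> s r /[!inE] /andP[s0 Ts] _ e.
  have /cards1P[x ex] : #|cubic_roots a (phi s)| == 1%N.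
    by rewrite (card_cubic_roots_eq1_root s0 (phiR s)).
  by have := phiR s; have := phiR r; rewrite -e ex !inE => /eqP-> /eqP->.
rewrite -(card_in_imset phi_inj); apply/subset_leq_card/subsetP.
move=> _ /imsetP[s /[!inE] /andP[s0 Ts] ->].
by rewrite s0 (card_cubic_roots_eq1_root s0 (phiR s)).
Qed.

Lemma card_trace_one : (#|trace_one| <= #|root_trace_one|)%N.
Proof.
pose k : F := if a == 0 then 1 else a^-1.
have k0 : k != 0 by rewrite /k; case: ifP => [_ | /negbT a0]; rewrite ?oner_eq0 ?invr_eq0.
rewrite -(card_imset _ (mulIf k0)); apply/subset_leq_card/subsetP.
move=> _ /imsetP[b /[!inE] /andP[b0 Tb] ->].
have e : a / (b * k) ^+ 2 = a ^+ 3 / b ^+ 2.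
  rewrite /k; case: ifP => [/eqP-> | /negbT a0]; first by rewrite expr0n !mul0r.
  by field; rewrite b0 a0.
rewrite e Tb andbT mulf_neq0 ?mulf_neq0 //.
apply: contraTneq Tb => u0; rewrite -e.
rewrite -[a](addKr_pchar2 charF ((b * k) ^+ 2)) u0 addr0 divff ?expf_neq0 ?mulf_neq0 //.
by rewrite Tr2D (addrr_pchar2 charF) eq_sym oner_eq0.
Qed.

Lemma card_cubic_roots_eq1 b : b != 0 ->
  (#|cubic_roots a b| == 1%N) = (Tr2 (1 + a ^+ 3 / b ^+ 2) == 1).
Proof.
move=> b0; have /eqP eq_sets : unique_root == trace_one.
  rewrite -(subset_leqif_cards unique_root_sub_trace_one) eqn_leq.
  rewrite subset_leq_card ?unique_root_sub_trace_one //=.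
  exact: leq_trans card_trace_one card_root_trace_one.
have : (b \in unique_root) = (b \in trace_one) by rewrite eq_sets.
by rewrite !inE b0.
Qed.

End UniqueRoot.

Lemma card_cubic_roots0 a : a != 0 -> #|cubic_roots a 0| != 1%N.
Proof.
move=> a0; have [r r2] := sqrt_char2 a.
have r0 : r != 0 by apply: contra_eq_neq r2 => ->; rewrite expr0n eq_sym.
have rR : r \in cubic_roots a 0 by rewrite in_cubic_roots r2 (addrr_pchar2 charF) mulr0.
have zR : 0 \in cubic_roots a 0 by rewrite in_cubic_roots mul0r.
apply/negP => /cards1P[x ex].
by move: zR rR r0; rewrite ex !inE => /eqP <- /eqP ->; rewrite eqxx.
Qed.

Lemma card_cubic_shift c a1 a0 :
  #|[set t : F | t ^+ 3 + c * t ^+ 2 + a1 * t + a0 == 0]|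
  = #|cubic_roots (c ^+ 2 + a1) (c * a1 + a0)|.
Proof.
rewrite -(card_preimset _ (addIr c)); apply: eq_card => s; rewrite /cubic_roots !inE.
have -> : (s + c) ^+ 3 + c * (s + c) ^+ 2 + a1 * (s + c) + a0
    = s ^+ 3 + (c ^+ 2 + a1) * s + (c * a1 + a0)
      + 2%:R * (2%:R * c * s ^+ 2 + 2%:R * c ^+ 2 * s + c ^+ 3) by ring.
by rewrite two_eq0 mul0r addr0.
Qed.

Lemma card_cubic_delta_eq1 mu g : mu != 1 -> g != 0 ->
  (#|[set t : F | t ^+ 3 + g * t ^+ 2 + mu * t + g == 0]| == 1%N)
  = (Tr2 (delta mu g) == 1).
Proof.
move=> mu1 g0; have mu1_neq0 : mu + 1 != 0 by rewrite addr_eq0 (oppr_pchar2 charF).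
have b0 : g * mu + g != 0 by rewrite -[X in _ + X]mulr1 -mulrDr mulf_neq0.
rewrite card_cubic_shift card_cubic_roots_eq1 //.
pose z := (g ^+ 2 + 1) / (mu + 1).
have -> : delta mu g = 1 + (g ^+ 2 + mu) ^+ 3 / (g * mu + g) ^+ 2 + artin_schreier z
    + 2%:R * (- (g ^+ 2 + g ^+ 4 + g ^+ 6 + mu * g ^+ 2 + 2%:R * mu * g ^+ 4
                 + 2%:R * mu ^+ 2 * g ^+ 2) / (g ^+ 2 * (mu + 1) ^+ 2)).
  by rewrite /delta /artin_schreier /z; field; rewrite g0 mu1_neq0 b0.
by rewrite two_eq0 mul0r addr0 [Tr2 (_ + artin_schreier z)]Tr2D Tr2_artin_schreier addr0.
Qed.

Lemma card_cubic_deltat_eq1 mu c : mu != 1 -> c != 0 ->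
  (#|[set t : F | t ^+ 3 + c * t ^+ 2 + t + mu * c == 0]| == 1%N)
  = (Tr2 (deltat mu c) == 1).
Proof.
move=> mu1 c0; have mu1_neq0 : mu + 1 != 0 by rewrite addr_eq0 (oppr_pchar2 charF).
have -> : [set t : F | t ^+ 3 + c * t ^+ 2 + t + mu * c == 0]
    = [set t : F | t ^+ 3 + c * t ^+ 2 + 1 * t + mu * c == 0].
  by apply/setP => t; rewrite !inE mul1r.
have b0 : c * 1 + mu * c != 0 by rewrite mulrC -mulrDl mulf_neq0 // addrC.
rewrite card_cubic_shift card_cubic_roots_eq1 //.
pose z := (c ^+ 2 + 1) / (mu + 1).
have -> : deltat mu c = 1 + (c ^+ 2 + 1) ^+ 3 / (c * 1 + mu * c) ^+ 2 + artin_schreier z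
    + 2%:R * (- (3%:R * c ^+ 2 + 3%:R * c ^+ 4 + c ^+ 6 + mu * c ^+ 2)
              / (c ^+ 2 * (mu + 1) ^+ 2)).
  by rewrite /deltat /artin_schreier /z; field; rewrite c0 mu1_neq0 -[c in c + _]mulr1 b0.
by rewrite two_eq0 mul0r addr0 [Tr2 (_ + artin_schreier z)]Tr2D Tr2_artin_schreier addr0.
Qed.

End CharTwo.

Theorem lemma6p4 (F : finFieldType) (mu : F) :
  2%N \in [pchar F] -> mu != 0 -> mu != 1 ->
  N1 mu = #|[set gamma : F | (gamma != 0) && (Tr2 (delta mu gamma) == 1)]| /\
  N1t mu = #|[set c : F | (c != 0) && (Tr2 (deltat mu c) == 1)]|.
Proof.
move=> charF mu0 mu1; split; apply: eq_card => x; rewrite !inE.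
  have [-> | x0] := eqVneq x 0; last by rewrite card_cubic_delta_eq1.
  rewrite (card_cubic_shift charF) expr2 !mul0r !add0r /=.
  exact/negbTE/(card_cubic_roots0 charF).
have [-> | x0] := eqVneq x 0; first by [].
by rewrite card_cubic_deltat_eq1.
Qed.
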